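(* Let $\mathcal{D}\subset\mathbb{R}^d$ be bounded with non-empty interior $\mathcal{D}^\circ$, and let $\mathcal{C}\subset\Gamma\backslash G\times\mathcal{D}^\circ$ be compact. Then there exists $\kappa(\mathcal{C})>0$ such that (i) $F(M,t)<\kappa(\mathcal{C})$ whenever $(\Gamma M,t)\in\mathcal{C}$, and (ii) $F$ is continuous at every $(\Gamma M,t)\in\mathcal{C}$ satisfying \[(\mathbb{Z}^{d+1}M\setminus\{0\})\cap\partial\big((\mathcal{D}-t)\times[0,\kappa(\mathcal{C})]\big)=\emptyset .\]
   Context: Let $G=\operatorname{SL}(d+1,\mathbb{R})$ and $\Gamma=\operatorname{SL}(d+1,\mathbb{Z})$; vectors are row vectors, and $\mathbb{Z}^{d+1}M$ is the lattice spanned by the rows of $M$. For $M\in G$ and $t\in\mathcal{D}$, $F(M,t)=\min\{y>0\mid (x,y)\in\mathbb{Z}^{d+1}M,\ x+t\in\mathcal{D}\}$ (with $x\in\mathbb{R}^d$, $y\in\mathbb{R}$), and $F(M,t)=\infty$ if no minimum exists; $F(M,t)$ depends only on $\Gamma M$, so $F$ is a function on $\Gamma\backslash G\times\mathcal{D}^\circ$. $\mathcal{D}-t=\{x-t\mid x\in\mathcal{D}\}$. *)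

From HB Require Import structures.
From mathcomp Require Import all_boot all_order all_algebra.
From mathcomp Require Import all_classical all_reals all_analysis.
Set Implicit Arguments. Unset Strict Implicit. Unset Printing Implicit Defensive.
Import Order.TTheory GRing.Theory Num.Theory.
Import numFieldNormedType.Exports.
Local Open Scope classical_set_scope.
Local Open Scope ring_scope.

(* Vectors are row vectors: R^d = 'rV[R]_d, R^(d+1) = 'rV[R]_(d + 1), and a
   vector v of R^(d+1) is written (x, y) with x = lsubmx v in R^d and
   y = rsubmx v 0 0 in R. *)

(* G = SL(d+1, R) *)
Definition inSL (R : realType) (d : nat) (M : 'M[R]_(d + 1)) : Prop := \det M = 1.

(* Gamma = SL(d+1, Z), acting on the left. *)
Definition inSLZ (d : nat) (g : 'M[int]_(d + 1)) : Prop := \det g = 1.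

Definition intmx (R : realType) (m n : nat) (A : 'M[int]_(m, n)) : 'M[R]_(m, n) :=
  map_mx (fun z : int => z%:~R) A.

Definition latpt (R : realType) (d : nat) (M : 'M[R]_(d + 1)) (u : 'rV[int]_(d + 1))
  : 'rV[R]_(d + 1) := intmx R u *m M.

Definition xpart (R : realType) (d : nat) (v : 'rV[R]_(d + 1)) : 'rV[R]_d := lsubmx v.
Definition ypart (R : realType) (d : nat) (v : 'rV[R]_(d + 1)) : R := rsubmx v 0 0.

Definition Fset (R : realType) (d : nat) (D : set 'rV[R]_d)
  (M : 'M[R]_(d + 1)) (t : 'rV[R]_d) : set R :=
  [set y | 0 < y /\ exists u : 'rV[int]_(d + 1),
      ypart (latpt M u) = y /\ D (xpart (latpt M u) + t)].

Definition Ffun (R : realType) (d : nat) (D : set 'rV[R]_d)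
  (M : 'M[R]_(d + 1)) (t : 'rV[R]_d) : \bar R :=
  match pselect (exists y, Fset D M t y /\ forall y', Fset D M t y' -> y <= y') with
  | left h => (projT1 (cid h))%:E
  | right _ => +oo%E
  end.

(* Subsets of Gamma\G x D° are represented by their preimages in G x D°,
   i.e. Gamma-saturated subsets of G x D°. *)
Definition gamma_invariant (R : realType) (d : nat)
  (S : set ('M[R]_(d + 1) * 'rV[R]_d)) : Prop :=
  forall (g : 'M[int]_(d + 1)) (M : 'M[R]_(d + 1)) (t : 'rV[R]_d),
    inSLZ g -> S (M, t) -> S (intmx R g *m M, t).

(* Open subsets of Gamma\G x D° (quotient topology) correspond exactly to the
   traces on G x D° of Gamma-invariant open subsets of the ambient space
   'M_(d+1) x R^d. *)
Definition quot_open (R : realType) (d : nat)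
  (O : set ('M[R]_(d + 1) * 'rV[R]_d)) : Prop :=
  open O /\ gamma_invariant O.

Definition quot_compact (R : realType) (d : nat) (D : set 'rV[R]_d)
  (C : set ('M[R]_(d + 1) * 'rV[R]_d)) : Prop :=
  [/\ (forall M t, C (M, t) -> inSL M /\ (D°) t),
      gamma_invariant C &
      forall (I : Type) (U : I -> set ('M[R]_(d + 1) * 'rV[R]_d)),
        (forall i, quot_open (U i)) ->
        (C `<=` \bigcup_(i in setT) U i) ->
        exists J : set I, finite_set J /\ C `<=` \bigcup_(i in J) U i].

Definition F_continuous_at (R : realType) (d : nat) (D : set 'rV[R]_d)
  (M : 'M[R]_(d + 1)) (t : 'rV[R]_d) : Prop :=
  forall V : set (\bar R), nbhs (Ffun D M t) V ->
    exists O, [/\ quot_open O, O (M, t) &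
      forall M' t', O (M', t') -> inSL M' -> (D°) t' -> V (Ffun D M' t')].

Definition bdry (R : realType) (n : nat) (A : set 'rV[R]_n) : set 'rV[R]_n :=
  closure A `\` A°.

Definition cyl (R : realType) (d : nat) (D : set 'rV[R]_d) (t : 'rV[R]_d) (kappa : R)
  : set 'rV[R]_(d + 1) :=
  [set v | D (xpart v + t) /\ 0 <= ypart v <= kappa].

(* By pigeonhole (Dirichlet), every
   unimodular lattice Z^(d+1) M has a point (x, y) with y > 0 and |x| as small
   as we like; for t in D° this point lies over D - t, stays admissible under
   small perturbations of (M, t), and so bounds F locally.  Compactness of C
   and Gamma-invariance of F turn these local bounds into a single kappa.
   For continuity at (M, t) with F(M, t) = y0 < kappa, the minimizing lattice
   point lies in the interior of the cylinder (D - t) x [0, kappa] and bounds F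
   from above nearby.  From below, only finitely many lattice vectors can
   produce heights <= y0 - eps near M, since their integer coordinates are
   uniformly bounded; each of them lies either in the interior of the
   cylinder, so its height is >= y0, or outside its closure, so it stays
   inadmissible below height kappa; the boundary hypothesis excludes the rest. *)

From HB Require Import structures.
From mathcomp Require Import all_boot all_order all_algebra.
From mathcomp Require Import all_classical all_reals all_analysis.
From mathcomp Require Import finmap ring lra zify.
Import Order.TTheory GRing.Theory Num.Theory.
Import numFieldNormedType.Exports.
Local Open Scope classical_set_scope.
Local Open Scope ring_scope.
Set Implicit Arguments. Unset Strict Implicit. Unset Printing Implicit Defensive.

Section MatrixNorm.
Variable R : realType.

Lemma ler_mx_entry_norm m n (A : 'M[R]_(m, n)) i j : `|A i j| <= `|A|.
Proof.
by rewrite [leRHS]/Num.Def.normr /= mx_normrE; apply/bigmax_geP; right; exists (i, j).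
Qed.

Lemma mx_norm_le m n (A : 'M[R]_(m, n)) e :
  0 <= e -> (forall i j, `|A i j| <= e) -> `|A| <= e.
Proof.
move=> e0 Ae; rewrite [leLHS]/Num.Def.normr /= mx_normrE.
by apply: bigmax_le => // -[i j] _; exact: Ae.
Qed.

Lemma ler_norm_mulmx m k n (A : 'M[R]_(m, k)) (B : 'M[R]_(k, n)) :
  `|A *m B| <= k%:R * (`|A| * `|B|).
Proof.
apply: mx_norm_le => [|i j]; first by rewrite !mulr_ge0.
rewrite mxE (le_trans (ler_norm_sum _ _ _)) //.
rewrite -[X in X%:R]card_ord mulr_natl -sumr_const; apply: ler_sum => l _.
by rewrite normrM ler_pM // ler_mx_entry_norm.
Qed.

Lemma ler_norm_row_mx m n1 n2 (A : 'M[R]_(m, n1)) (B : 'M[R]_(m, n2)) :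
  `|row_mx A B| <= `|A| + `|B|.
Proof.
apply: mx_norm_le => [|i j]; first by rewrite addr_ge0.
case: (split_ordP j) => k ->; rewrite ?row_mxEl ?row_mxEr.
  by rewrite ler_wpDr // ler_mx_entry_norm.
by rewrite ler_wpDl // ler_mx_entry_norm.
Qed.

Lemma lipschitz_mx_continuous m k m' k' (f : 'M[R]_(m, k) -> 'M[R]_(m', k')) c :
  (forall A B, `|f A - f B| <= c * `|A - B|) -> continuous f.
Proof.
move=> fc A; apply/(@cvgrPdist_lt _ _ _ (nbhs A) (nbhs_filter A)) => e e0.
have c0 : 0 < `|c| + 1 by rewrite ltr_wpDl.
apply/nbhs_ballP; exists (e / (`|c| + 1)) => [|B]; first by rewrite /= divr_gt0.
rewrite -ball_normE /= ltr_pdivlMr // => AB.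
apply: le_lt_trans (fc A B) (le_lt_trans _ AB).
by rewrite mulrC ler_wpM2l // (le_trans (ler_norm c)) // lerDl.
Qed.

Lemma mulmx_continuous m k n (A : 'M[R]_(m, k)) :
  continuous (fun B : 'M[R]_(k, n) => A *m B).
Proof.
apply: (@lipschitz_mx_continuous _ _ _ _ _ (k%:R * `|A|)) => B C.
by rewrite -mulmxBr -mulrA ler_norm_mulmx.
Qed.

Lemma mulmxr_continuous m k n (B : 'M[R]_(k, n)) :
  continuous (fun A : 'M[R]_(m, k) => A *m B).
Proof.
apply: (@lipschitz_mx_continuous _ _ _ _ _ (k%:R * `|B|)) => A C.
by rewrite -mulmxBl mulrAC -mulrA ler_norm_mulmx.
Qed.

End MatrixNorm.

Section RowParts.
Variable (R : realType) (d : nat).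
Local Notation n := (d + 1)%N.
Implicit Types v w : 'rV[R]_n.

Lemma ypartE v : ypart v = v 0 (rshift d 0).
Proof. by rewrite /ypart mxE. Qed.

Lemma norm_xpart_le v : `|xpart v| <= `|v|.
Proof. by apply: mx_norm_le => // i j; rewrite /xpart mxE ler_mx_entry_norm. Qed.

Lemma norm_ypart_le v : `|ypart v| <= `|v|.
Proof. by rewrite ypartE ler_mx_entry_norm. Qed.

Lemma norm_le_parts v : `|v| <= `|xpart v| + `|ypart v|.
Proof.
rewrite -{1}[v]hsubmxK (le_trans (ler_norm_row_mx _ _)) // lerD2l.
by apply: mx_norm_le => // i j; rewrite !ord1.
Qed.

Lemma xpartB v w : xpart (v - w) = xpart v - xpart w.
Proof. exact: linearB. Qed.

Lemma ypartB v w : ypart (v - w) = ypart v - ypart w.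
Proof. by rewrite !ypartE !mxE. Qed.

Lemma xpartN v : xpart (- v) = - xpart v.
Proof. exact: linearN. Qed.

Lemma ypartN v : ypart (- v) = - ypart v.
Proof. by rewrite !ypartE !mxE. Qed.

Lemma ypart_row_mx (a : 'rV[R]_d) (b : 'rV[R]_1) : ypart (row_mx a b) = b 0 0.
Proof. by rewrite /ypart row_mxKr. Qed.

Lemma ypart_continuous : continuous (@ypart R d).
Proof.
have -> : @ypart R d = fun v => v 0 (rshift d 0) by apply/funext => v; rewrite ypartE.
exact: coord_continuous.
Qed.

End RowParts.

Section Lattice.
Variable (R : realType) (d : nat).
Local Notation n := (d + 1)%N.
Implicit Types (M : 'M[R]_n) (u : 'rV[int]_n).

Lemma intmxM m k p (A : 'M[int]_(m, k)) (B : 'M[int]_(k, p)) :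
  intmx R (A *m B) = intmx R A *m intmx R B.
Proof. exact: map_mxM. Qed.

Lemma det_intmx (g : 'M[int]_n) : \det (intmx R g) = (\det g)%:~R.
Proof. exact: det_map_mx. Qed.

Lemma norm_intmx_ge1 m k (A : 'M[int]_(m, k)) : A != 0 -> 1 <= `|intmx R A|.
Proof.
move=> /eqP A0; have [i [j Aij]] : exists i j, A i j != 0.
  apply/not_existsP => nA; apply: A0; apply/matrixP => i j; rewrite mxE.
  by apply/eqP/negPn/negP => Aij; apply: (nA i); exists j.
apply: le_trans (ler_mx_entry_norm _ i j).
rewrite mxE -intr_norm ler1z; lia.
Qed.

Lemma latpt_mul (g : 'M[int]_n) M u :
  latpt (intmx R g *m M) u = latpt M (u *m g).
Proof. by rewrite /latpt intmxM mulmxA. Qed.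

Lemma latptN M u : latpt M (- u) = - latpt M u.
Proof. by rewrite /latpt /intmx map_mxN mulNmx. Qed.

Lemma latptB M u u' : latpt M (u - u') = latpt M u - latpt M u'.
Proof. by rewrite /latpt /intmx map_mxB mulmxBl. Qed.

Lemma latpt0 M : latpt M 0 = 0.
Proof. by rewrite /latpt /intmx map_mx0 mul0mx. Qed.

Lemma latpt_eq0 M u : M \in unitmx -> (latpt M u == 0) = (u == 0).
Proof.
move=> Mu; apply/eqP/eqP => [|->]; last exact: latpt0.
move/(congr1 (mulmx^~ (invmx M))); rewrite mulmxK // mul0mx => /matrixP uR.
by apply/matrixP => i j; have := uR i j; rewrite !mxE => /eqP; rewrite intr_eq0 => /eqP.
Qed.

Lemma norm_intmx_le M u : M \in unitmx ->
  `|intmx R u| <= n%:R * (`|latpt M u| * `|invmx M|).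
Proof. by move=> Mu; rewrite -{1}(mulmxK Mu (intmx R u)) ler_norm_mulmx. Qed.

Lemma bounded_intvec_finite (B : R) : exists (I : finType) (e : I -> 'rV[int]_n),
  forall u, `|intmx R u| <= B -> exists i, u = e i.
Proof.
pose K := Num.truncn B.
exists {ffun 'I_n -> 'I_(K.*2.+1)}.
exists (fun f : {ffun 'I_n -> 'I_(K.*2.+1)} => \row_j ((f j : nat)%:Z - K%:Z)).
move=> u uB; have uK j : (absz (u 0%R j) <= K)%N.
  rewrite truncn_ge_nat ?natr_absz ?intr_norm; last exact: le_trans (normr_ge0 _) uB.
  by apply: le_trans uB; have := ler_mx_entry_norm (intmx R u) 0%R j; rewrite mxE.
have uK' j : (absz (u 0%R j + K%:Z)%R < K.*2.+1)%N by have := uK j; rewrite -muln2; lia.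
exists [ffun j => Ordinal (uK' j)]; apply/matrixP => i j.
by rewrite !mxE ffunE /= (ord1 i); have := uK j; lia.
Qed.

(* Self-improving bound: |u| <= n |uM| |M^-1| and |uM| <= |uM'| + n |u| |M - M'|,
   and the last term is absorbed once |M - M'| is small. *)
Lemma near_norm_intmx_le M : M \in unitmx ->
  \forall M' \near M, forall u,
    `|intmx R u| <= 2 * (n%:R * (`|latpt M' u| * `|invmx M|)).
Proof.
move=> Mu; set iM := `|invmx M|.
have iM0 : 0 <= iM := normr_ge0 _.
have c0 : 0 < 2 * (n%:R * n%:R * (iM + 1)) by rewrite !mulr_gt0 ?ltr0n ?addn1 //; lra.
have e0 : 0 < 1 / (2 * (n%:R * n%:R * (iM + 1))) by rewrite divr_gt0.
near=> M' => u.
have : `|M - M'| < 1 / (2 * (n%:R * n%:R * (iM + 1))).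
  near: M'; have := nbhsx_ballx M _ e0; rewrite -ball_normE; exact.
rewrite ltr_pdivlMr // => MM'.
set X := `|intmx R u|; set L' := `|latpt M' u|; set dM := `|M - M'|.
have [X0 L'0 dM0] : [/\ 0 <= X, 0 <= L' & 0 <= dM] by rewrite !normr_ge0.
have n0 : 0 <= n%:R :> R := ler0n _ _.
have LL' : `|latpt M u| <= L' + n%:R * (X * dM).
  rewrite -[latpt M u](subrK (latpt M' u)) addrC (le_trans (ler_normD _ _)) // lerD2l.
  by rewrite /latpt -mulmxBr ler_norm_mulmx.
have XL : X <= n%:R * ((L' + n%:R * (X * dM)) * iM).
  by rewrite (le_trans (norm_intmx_le _ Mu)) // ler_wpM2l // ler_wpM2r.
have small : n%:R * n%:R * iM * dM <= 1 / 2.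
  have : 0 <= n%:R * n%:R * dM by rewrite !mulr_ge0.
  move: MM'; rewrite -/dM; nra.
have : (n%:R * n%:R * iM * dM) * X <= X / 2 by nra.
move: XL; nra.
Unshelve. all: by end_near.
Qed.

Lemma latpt_continuous u : continuous (fun M => latpt M u).
Proof. exact: mulmx_continuous. Qed.

End Lattice.

Section Gamma.
Variable (R : realType) (d : nat).
Local Notation n := (d + 1)%N.
Implicit Types (g h : 'M[int]_n) (M : 'M[R]_n).

Lemma inSLZ1 : inSLZ (1%:M : 'M[int]_n).
Proof. exact: det1. Qed.

Lemma inSLZ_unit g : inSLZ g -> g \in unitmx.
Proof. by rewrite unitmxE => ->; rewrite unitr1. Qed.

Lemma inSLZ_mul g h : inSLZ g -> inSLZ h -> inSLZ (g *m h).
Proof. by rewrite /inSLZ det_mulmx => -> ->; rewrite mulr1. Qed.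

Lemma inSLZ_inv g : inSLZ g -> inSLZ (invmx g).
Proof. by rewrite /inSLZ det_inv => ->; rewrite invr1. Qed.

Lemma inSL_unit M : inSL M -> M \in unitmx.
Proof. by rewrite unitmxE => ->; rewrite unitr1. Qed.

Lemma inSL_mul g M : inSLZ g -> inSL M -> inSL (intmx R g *m M).
Proof. by rewrite /inSLZ /inSL det_mulmx det_intmx => -> ->; rewrite mulr1. Qed.

End Gamma.

Lemma fin_argmin (R : realType) (I : finType) (P : I -> Prop) (f : I -> R) :
  (exists i, P i) -> exists i, P i /\ forall j, P j -> f i <= f j.
Proof.
case=> i0 /asboolP Pi0.
case: (@arg_minP _ _ _ i0 (fun i => `[< P i >]) f Pi0) => i /asboolP Pi fi_min.
by exists i; split => // j /asboolP; exact: fi_min.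
Qed.

Lemma bounded_set_norm_le (R : realType) d (D : set 'rV[R]_d) :
  bounded_set D -> exists rho, forall x, D x -> `|x| <= rho.
Proof. by case=> r [_ Dr]; exists (r + 1) => x Dx; apply: (Dr (r + 1)); rewrite ?ltrDl. Qed.

Section Ffun.
Variable (R : realType) (d : nat) (D : set 'rV[R]_d).
Local Notation n := (d + 1)%N.
Implicit Types (M : 'M[R]_n) (t : 'rV[R]_d).

Lemma Ffun_is_min M t y : Ffun D M t = y%:E ->
  Fset D M t y /\ forall y', Fset D M t y' -> y <= y'.
Proof. by rewrite /Ffun; case: pselect => // h [<-]; case: (cid h). Qed.

Lemma Ffun_fin_of_lt M t b : (Ffun D M t < b%:E)%E -> exists y, Ffun D M t = y%:E.
Proof. by rewrite /Ffun; case: pselect => // h _; eexists. Qed.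

Lemma Ffun_eq_min M t y : Fset D M t y -> (forall y', Fset D M t y' -> y <= y') ->
  Ffun D M t = y%:E.
Proof.
move=> Fy y_min; rewrite /Ffun; case: pselect => [h|[]]; last by exists y.
case: (cid h) => /= m [Fm m_min]; congr (_%:E).
by apply/eqP; rewrite eq_le m_min // y_min.
Qed.

Lemma lt_Ffun M t a : (forall y, Fset D M t y -> a < y) -> (a%:E < Ffun D M t)%E.
Proof.
move=> aF; rewrite /Ffun; case: pselect => [h|_]; last exact: ltey.
by case: (cid h) => /= m [Fm _]; rewrite lte_fin aF.
Qed.

Lemma norm_le_bounded_shift rho (v : 'rV[R]_n) t : (forall x, D x -> `|x| <= rho) ->
  D (xpart v + t) -> `|v| <= rho + `|t| + `|ypart v|.
Proof.
move=> Drho vD; rewrite (le_trans (norm_le_parts v)) // lerD2r.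
by rewrite -[xpart v](addrK t) (le_trans (ler_normB _ _)) // lerD2r Drho.
Qed.

(* Admissible points of height <= y have bounded integer coordinates, so a
   lowest one exists. *)
Lemma Ffun_le_Fset M t y : bounded_set D -> M \in unitmx -> Fset D M t y ->
  (Ffun D M t <= y%:E)%E.
Proof.
move=> /bounded_set_norm_le [rho Drho] Mu Fy.
pose P u := 0 < ypart (latpt M u) <= y /\ D (xpart (latpt M u) + t).
have [I [e eP]] := bounded_intvec_finite d (n%:R * ((rho + `|t| + y) * `|invmx M|)).
have Pe u : P u -> exists i, u = e i.
  move=> [/andP[uy0 uy] uD]; apply: eP.
  rewrite (le_trans (norm_intmx_le _ Mu)) // ler_wpM2l // ler_wpM2r //.
  by rewrite (le_trans (norm_le_bounded_shift Drho uD)) // lerD2l (ger0_norm (ltW uy0)).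
have [i [Pi i_min]] : exists i, P (e i) /\
    forall j, P (e j) -> ypart (latpt M (e i)) <= ypart (latpt M (e j)).
  apply: fin_argmin; case: Fy => y0 [u [uy uD]].
  have [i ui] : exists i, u = e i by apply: Pe; rewrite /P uy y0 lexx.
  by exists i; rewrite /P -ui uy y0 lexx.
case: (Pi) => /andP[iy0 iy] iD.
rewrite (@Ffun_eq_min _ _ (ypart (latpt M (e i)))) ?lee_fin //.
  by split => //; exists (e i).
move=> y' [y'0 [u [uy' uD]]]; have [yy'|y'y] := ltP y y'; first exact: le_trans (ltW yy').
have [j uj] : exists j, u = e j by apply: Pe; rewrite /P uy' y'0.
by rewrite -uy' uj; apply: i_min; rewrite /P -uj uy' y'0.
Qed.

Lemma Fset_gamma g M t : inSLZ g -> Fset D (intmx R g *m M) t = Fset D M t.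
Proof.
move=> gSL; apply/seteqP; split => y [y0 [u [uy uD]]]; split => //.
  by exists (u *m g); rewrite -latpt_mul.
exists (u *m invmx g); rewrite latpt_mul -mulmxA mulVmx ?mulmx1 //.
exact: inSLZ_unit.
Qed.

Lemma Ffun_gamma g M t : inSLZ g -> Ffun D (intmx R g *m M) t = Ffun D M t.
Proof. by move=> gSL; rewrite /Ffun Fset_gamma. Qed.

End Ffun.

Section Dirichlet.
Variable R : realType.

Lemma truncn_eq_dist (x y : R) : 0 <= x -> 0 <= y ->
  Num.truncn x = Num.truncn y -> `|x - y| < 1.
Proof.
move=> /truncn_itv /andP[x1 x2] /truncn_itv /andP[y1 y2] xy.
by move: x1 x2; rewrite xy ltr_norml => x1 x2; move: y2; rewrite -natr1; lra.
Qed.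

Lemma pigeonhole_cells d (I : finType) (x : I -> 'I_d -> R) (T s : R) : 0 < s ->
  (forall i j, `|x i j| < T) -> ((Num.truncn (2 * T / s)).+1 ^ d < #|I|)%N ->
  exists i1 i2, i1 != i2 /\ forall j, `|x i1 j - x i2 j| < s.
Proof.
move=> s0 xT cardI; pose P := (Num.truncn (2 * T / s)).+1.
have cell0 i j : 0 <= (x i j + T) / s.
  by rewrite divr_ge0 ?ltW //; have := xT i j; rewrite ltr_norml; lra.
have cellP i j : (Num.truncn ((x i j + T) / s) < P)%N.
  rewrite ltnS le_truncn // ler_pM2r ?invr_gt0 //.
  by have := xT i j; rewrite ltr_norml; lra.
pose cell i : {ffun 'I_d -> 'I_P} := [ffun j => Ordinal (cellP i j)].
have /injectivePn [i1 [i2 i12 cell12]] : ~~ injectiveb cell.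
  apply/injectiveP => /leq_card; rewrite card_ffun !card_ord.
  by apply/negP; rewrite -ltnNge.
exists i1, i2; split => // j.
have := congr1 (fun c : {ffun 'I_d -> 'I_P} => val (c j)) cell12; rewrite /= !ffunE /=.
move=> /(truncn_eq_dist (cell0 i1 j) (cell0 i2 j)).
rewrite -mulrBl (_ : x i1 j + T - (x i2 j + T) = x i1 j - x i2 j); last first.
  by rewrite opprD addrACA subrr addr0.
by rewrite normrM normfV (gtr0_norm s0) ltr_pdivrMr // mul1r.
Qed.

(* With c := a + b + 1 and c^d < N, the left side is at most (N c)^d < N^(d+1). *)
Lemma box_count_lt d (a b : R) : 0 <= a -> 0 <= b ->
  exists N : nat, ((Num.truncn (N%:R * a + b)).+1 ^ d < N.+1 ^ d.+1)%N.
Proof.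
move=> a0 b0; pose c := a + b + 1; pose N := (Num.truncn (c ^+ d)).+1.
have N1 : 1 <= N%:R :> R by rewrite ler1n.
have cN : c ^+ d < N%:R := truncnS_gt _.
have c0 : 0 <= c by rewrite /c; lra.
have cellN : (Num.truncn (N%:R * a + b)).+1%:R <= N%:R * c.
  have := truncn_le (N%:R * a + b); rewrite addr_ge0 ?mulr_ge0 // -natr1 /c.
  by move: N1; nra.
exists N; rewrite -(ltr_nat R) !natrX.
rewrite (le_lt_trans ((lterXn2r R).1 d _ _ _ _ cellN)) ?nnegrE ?mulr_ge0 //.
rewrite exprMn (@lt_le_trans _ _ (N%:R ^+ d * N%:R)) ?ltr_pM2l ?exprn_gt0 //.
by rewrite -exprSr (lterXn2r R).1 ?nnegrE // ler_nat.
Qed.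

End Dirichlet.

Section SmallLatticePoints.
Variable (R : realType) (d : nat).
Local Notation n := (d + 1)%N.
Implicit Types (M : 'M[R]_n).

(* The (N+1)^(d+1) integer vectors with entries in [0, N] have their x-parts in
   fewer cells of side s. *)
Lemma exists_small_xpart M s : 0 < s ->
  exists w, w != 0 /\ `|xpart (latpt M w)| <= s.
Proof.
move=> s0; have nM0 : 0 <= n%:R * `|M| by rewrite mulr_ge0.
have [N cardN] := box_count_lt d (divr_ge0 (mulr_ge0 (ler0n R 2) nM0) (ltW s0))
                              (divr_ge0 (ler0n R 2) (ltW s0)).
pose uf (f : {ffun 'I_n -> 'I_N.+1}) : 'rV[int]_n := \row_i ((f i : nat)%:Z).
pose T := N%:R * (n%:R * `|M|) + 1.
have ufT f j : `|xpart (latpt M (uf f)) 0 j| < T.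
  rewrite (le_lt_trans (ler_mx_entry_norm _ _ _)) // (le_lt_trans (norm_xpart_le _)) //.
  rewrite (le_lt_trans (ler_norm_mulmx _ _)) // /T ltr_pwDr //.
  rewrite [leRHS]mulrCA ler_wpM2l //.
  rewrite ler_wpM2r // mx_norm_le // => i k; rewrite !mxE ger0_norm // ler_nat.
  by rewrite -ltnS.
have /(pigeonhole_cells s0 ufT) [f1 [f2 [f12 close]]] :
    ((Num.truncn (2 * T / s)).+1 ^ d < #|{ffun 'I_n -> 'I_N.+1}|)%N.
  rewrite card_ffun !card_ord addn1.
  suff -> : 2 * T / s = N%:R * (2 * (n%:R * `|M|) / s) + 2 / s by [].
  by rewrite /T; field; rewrite gt_eqF.
exists (uf f1 - uf f2); split.
  rewrite subr_eq0; apply: contra f12 => /eqP uf12; apply/eqP/ffunP => i.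
  by apply/val_inj; have := congr1 (fun u : 'rV[int]_n => u 0 i) uf12; rewrite !mxE => -[].
apply: mx_norm_le => [|i j]; first exact: ltW.
by have := close j; rewrite (ord1 i) latptB xpartB !mxE => /ltW.
Qed.

Lemma latpt_discrete M : M \in unitmx ->
  exists2 c, 0 < c & forall w, w != 0 -> c <= `|latpt M w|.
Proof.
move=> Mu; have iM0 : 0 <= `|invmx M| := normr_ge0 _.
have nM0 : 0 < n%:R * (`|invmx M| + 1) by rewrite mulr_gt0 ?ltr0n ?addn1 //; lra.
exists (1 / (n%:R * (`|invmx M| + 1))) => [|w w0]; first exact: divr_gt0.
rewrite ler_pdivrMr // (le_trans (norm_intmx_ge1 R w0)) //.
rewrite (le_trans (norm_intmx_le _ Mu)) // mulrCA ler_wpM2l // ler_wpM2l //.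
by rewrite lerDl.
Qed.

Lemma exists_latpt_small_xpart M r : M \in unitmx -> 0 < r ->
  exists u, 0 < ypart (latpt M u) /\ `|xpart (latpt M u)| < r.
Proof.
move=> Mu r0; have [c c0 cM] := latpt_discrete Mu.
have s0 : 0 < Num.min r c / 2 by rewrite divr_gt0 // lt_min r0.
have mr : Num.min r c <= r by rewrite ge_min lexx.
have mc : Num.min r c <= c by rewrite ge_min lexx orbT.
have [w [w0 wx]] := exists_small_xpart M s0.
have [wy|wy|wy] := ltgtP (ypart (latpt M w)) 0.
- by exists (- w); rewrite latptN ypartN xpartN normrN oppr_gt0; split; lra.
- by exists w; split; lra.
- have := le_trans (cM _ w0) (norm_le_parts _); rewrite wy normr0 addr0; lra.
Qed.

End SmallLatticePoints.

Section Shift.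
Variable (R : realType) (d : nat).
Local Notation n := (d + 1)%N.

(* For p = (M', t') and the point (x, y) := u M', this is (x + t' - t, y): it lies
   in (D - t) x [0, k] iff (x, y) lies in (D - t') x [0, k], and it tends to u M
   as p tends to (M, t). *)
Definition shift_latpt (u : 'rV[int]_n) (t : 'rV[R]_d) (p : 'M[R]_n * 'rV[R]_d)
  : 'rV[R]_n := latpt p.1 u + row_mx (p.2 - t) 0.

Lemma xpart_shift_latpt u t p :
  xpart (shift_latpt u t p) + t = xpart (latpt p.1 u) + p.2.
Proof. by rewrite /xpart linearD /= row_mxKl addrA subrK. Qed.

Lemma ypart_shift_latpt u t p : ypart (shift_latpt u t p) = ypart (latpt p.1 u).
Proof. by rewrite /shift_latpt /ypart linearD /= row_mxKr addr0. Qed.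

Lemma shift_latpt_continuous u t : continuous (shift_latpt u t).
Proof.
have latpt_fst : continuous (fun p : 'M[R]_n * 'rV[R]_d => latpt p.1 u).
  by move=> p; apply: continuous_comp; [exact: cvg_fst | exact: latpt_continuous].
have shift_snd : continuous (fun p : 'M[R]_n * 'rV[R]_d => p.2 - t).
  by move=> p; apply: cvgB; [exact: cvg_snd | exact: cvg_cst].
have row_mx0_cont : continuous (fun a : 'rV[R]_d => row_mx a (0 : 'rV[R]_1)).
  have -> : (fun a : 'rV[R]_d => row_mx a (0 : 'rV[R]_1)) = fun a => a *m row_mx 1%:M 0.
    by apply/funext => a; rewrite mul_mx_row mulmx1 mulmx0.
  exact: mulmxr_continuous.
move=> p; apply: cvgD; first exact: latpt_fst.
exact: (continuous_comp (shift_snd p) (row_mx0_cont _)).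
Qed.

Lemma near_shift_latpt M t u (S : set 'rV[R]_n) : nbhs (latpt M u) S ->
  \forall p \near (M, t), S (shift_latpt u t p).
Proof.
have -> : latpt M u = shift_latpt u t (M, t) by rewrite /shift_latpt subrr row_mx0 addr0.
exact: shift_latpt_continuous.
Qed.

End Shift.

Lemma interior_of_not_bdry (R : realType) n (A : set 'rV[R]_n) v :
  closure A v -> ~ bdry A v -> A° v.
Proof. by move=> Av vbdry; apply: contrapT => vA; exact: vbdry. Qed.

Section LocalBounds.
Variable (R : realType) (d : nat) (D : set 'rV[R]_d).
Local Notation n := (d + 1)%N.
Implicit Types (M : 'M[R]_n) (t : 'rV[R]_d).

Lemma near_Ffun_lt M t u b : bounded_set D ->
  nbhs (latpt M u) [set w | D (xpart w + t) /\ 0 < ypart w < b] ->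
  \forall p \near (M, t), inSL p.1 -> (Ffun D p.1 p.2 < b%:E)%E.
Proof.
move=> Db /(near_shift_latpt t); apply: filterS => p [].
rewrite xpart_shift_latpt ypart_shift_latpt => uD /andP[uy0 uyb] pSL.
have Fy : Fset D p.1 p.2 (ypart (latpt p.1 u)) by split => //; exists u.
by rewrite (le_lt_trans (Ffun_le_Fset Db (inSL_unit pSL) Fy)) ?lte_fin.
Qed.

Lemma Ffun_locally_bounded M t : bounded_set D -> inSL M -> (D°) t ->
  exists b, \forall p \near (M, t), inSL p.1 -> (Ffun D p.1 p.2 < b%:E)%E.
Proof.
move=> Db MSL /nbhs_ballP [r r0 rD].
have [u [uy ux]] := exists_latpt_small_xpart (inSL_unit MSL) r0.
set v := latpt M u in uy ux *; exists (2 * ypart v); apply: (near_Ffun_lt Db).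
have e0 : 0 < Num.min (r - `|xpart v|) (ypart v) by rewrite lt_min subr_gt0 ux uy.
apply: filterS (nbhsx_ballx v _ e0) => w; rewrite -ball_normE /= lt_min.
case/andP=> vwx vwy; split.
  apply: rD; rewrite -ball_normE /= opprD addrCA subrr addr0 normrN.
  rewrite -[xpart w](subrK (xpart v)) (le_lt_trans (ler_normD _ _)) // distrC.
  by have := norm_xpart_le (v - w); rewrite xpartB; lra.
by have := norm_ypart_le (v - w); rewrite ypartB ler_norml; lra.
Qed.

Lemma cyl_interior_ypart_gt0 t k v : (cyl D t k)° v -> 0 < ypart v.
Proof.
move=> /nbhs_ballP [e /= e0 eS].
pose c : 'rV[R]_1 := const_mx (e / 2).
have [_ /andP[cy _]] : cyl D t k (v - row_mx 0 c).
  apply: eS; rewrite -ball_normE /= opprB addrC subrK.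
  rewrite (le_lt_trans (ler_norm_row_mx _ _)) // normr0 add0r.
  rewrite (@le_lt_trans _ _ (e / 2)) ?ltr_pdivrMr ?ltr_pMr ?ltr1n //.
  have e20 : 0 <= e / 2 by rewrite divr_ge0 // ltW.
  by apply: mx_norm_le => // i j; rewrite mxE ger0_norm.
by move: cy e0; rewrite ypartB ypart_row_mx mxE /=; lra.
Qed.

Lemma cyl_interior_nbhs t k b v : (cyl D t k)° v -> ypart v < b ->
  nbhs v [set w | D (xpart w + t) /\ 0 < ypart w < b].
Proof.
move=> vint vb.
have y_gt := @ypart_continuous _ _ v _ (lt_nbhsr (cyl_interior_ypart_gt0 vint)).
have y_lt := @ypart_continuous _ _ v _ (lt_nbhsl vb).
by apply: filterS3 vint y_gt y_lt => w [wD _] w0 wb; split => //; rewrite w0.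
Qed.

Lemma near_latpt_gt M t u k a : M \in unitmx -> a < k ->
  (forall y, Fset D M t y -> a < y) ->
  (latpt M u != 0 -> ~ bdry (cyl D t k) (latpt M u)) ->
  \forall p \near (M, t),
    D (xpart (latpt p.1 u) + p.2) -> 0 < ypart (latpt p.1 u) -> a < ypart (latpt p.1 u).
Proof.
move=> Mu ak aF ubdry; have [v0|vn0] := eqVneq (latpt M u) 0.
  have -> : u = 0 by apply/eqP; rewrite -(latpt_eq0 _ Mu) v0.
  by near=> p => _; rewrite latpt0 ypartE mxE ltxx.
have [vcl|vncl] := pselect (closure (cyl D t k) (latpt M u)).
  have vint := interior_of_not_bdry vcl (ubdry vn0).
  have [vD _] := interior_subset vint.
  have /lt_nbhsr/ypart_continuous : a < ypart (latpt M u).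
    by apply: aF; split; [exact: cyl_interior_ypart_gt0 vint | exists u].
  move=> /(near_shift_latpt t); apply: filterS => p.
  by rewrite /= ypart_shift_latpt.
have : nbhs (latpt M u) (~` closure (cyl D t k)).
  by apply: open_nbhs_nbhs; split => //; rewrite openC; exact: closed_closure.
move=> /(near_shift_latpt t); apply: filterS => p pncl pD py0.
rewrite ltNge; apply/negP => ya; apply: pncl; apply: subset_closure.
split; first by rewrite xpart_shift_latpt.
by rewrite ypart_shift_latpt (ltW py0) (le_trans ya (ltW ak)).
Unshelve. all: by end_near.
Qed.

(* Near (M, t), lattice vectors of height <= a over D have bounded coordinates,
   so [near_latpt_gt] is needed for finitely many of them only. *)
Lemma near_lt_Ffun M t k a : bounded_set D -> M \in unitmx -> a < k ->
  (forall y, Fset D M t y -> a < y) ->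
  (forall u, latpt M u != 0 -> ~ bdry (cyl D t k) (latpt M u)) ->
  \forall p \near (M, t), (a%:E < Ffun D p.1 p.2)%E.
Proof.
move=> Db Mu ak aF ubdry; have [rho Drho] := bounded_set_norm_le Db.
have [I [e eP]] := bounded_intvec_finite d
  (2 * (n%:R * ((rho + (`|t| + 1) + `|a|) * `|invmx M|))).
have near_e := @filter_forall _ _ _ (nbhs (M, t)) (nbhs_filter _)
  (fun i => near_latpt_gt Mu ak aF (ubdry (e i))).
have near_M : \forall p \near (M, t), forall u,
    `|intmx R u| <= 2 * (n%:R * (`|latpt p.1 u| * `|invmx M|)).
  exact: (@cvg_fst _ _ (nbhs M) (nbhs t) _ _ (near_norm_intmx_le Mu)).
have near_t : \forall p \near (M, t), `|t - p.2| < 1.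
  exact: (cvgr_dist_lt _ _ (@cvg_snd _ _ (nbhs M) (nbhs t) _) _ ltr01).
apply: filterS3 near_e near_M near_t => p pe pM pt.
apply: lt_Ffun => y [y0 [u [uy uD]]]; rewrite ltNge; apply/negP => ya.
have [i ui] : exists i, u = e i.
  apply: eP; rewrite (le_trans (pM u)) // ler_wpM2l // ler_wpM2l // ler_wpM2r //.
  rewrite (le_trans (norm_le_bounded_shift Drho uD)) // uy (ger0_norm (ltW y0)).
  rewrite lerD ?lerD2l ?(le_trans ya (ler_norm a)) //.
  by rewrite -[p.2](subrK t) (le_trans (ler_normD _ _)) // addrC lerD2l distrC ltW.
by have := pe i; rewrite -ui uy => /(_ uD y0); lra.
Qed.

End LocalBounds.

Section Saturation.
Variable (R : realType) (d : nat).
Local Notation n := (d + 1)%N.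
Local Notation point := ('M[R]_n * 'rV[R]_d)%type.

Definition gamma_act (g : 'M[int]_n) (p : point) : point := (intmx R g *m p.1, p.2).

Definition gamma_saturation (A : set point) : set point :=
  \bigcup_(g in [set g | inSLZ g]) gamma_act g @^-1` A°.

Lemma gamma_act_continuous g : continuous (gamma_act g).
Proof.
move=> p; apply: (@cvg_pair _ _ _ _ (nbhs (intmx R g *m p.1)) (nbhs p.2)).
  by apply: continuous_comp; [exact: cvg_fst | exact: mulmx_continuous].
exact: cvg_snd.
Qed.

Lemma gamma_saturation_open A : quot_open (gamma_saturation A).
Proof.
split.
  apply: bigcup_open => g _; apply: open_comp; last exact: open_interior.
  by move=> p _; exact: gamma_act_continuous.
move=> h M t hSL [g gSL gA]; exists (g *m invmx h).
  by apply: inSLZ_mul => //; exact: inSLZ_inv.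
by rewrite /gamma_act /= mulmxA -intmxM -mulmxA mulVmx ?mulmx1 // inSLZ_unit.
Qed.

Lemma gamma_saturation_nbhs A p : nbhs p A -> gamma_saturation A p.
Proof.
move=> pA; exists 1%:M; first exact: inSLZ1.
by rewrite /gamma_act /intmx map_mx1 /= mul1mx -surjective_pairing; exact: pA.
Qed.

End Saturation.

Section Continuity.
Variable (R : realType) (d : nat) (D : set 'rV[R]_d).
Local Notation n := (d + 1)%N.
Implicit Types (M : 'M[R]_n) (t : 'rV[R]_d).

Lemma gamma_saturation_Ffun (P : \bar R -> Prop) M t :
  gamma_saturation [set p | inSL p.1 -> P (Ffun D p.1 p.2)] (M, t) ->
  inSL M -> P (Ffun D M t).
Proof.
case=> g gSL /interior_subset /= gP MSL.
by rewrite -(Ffun_gamma D M t gSL); exact: gP (inSL_mul gSL MSL).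
Qed.

Lemma F_continuous_at_near M t :
  (forall V, nbhs (Ffun D M t) V ->
     \forall p \near (M, t), inSL p.1 -> V (Ffun D p.1 p.2)) ->
  F_continuous_at D M t.
Proof.
move=> FV V /FV nV; exists (gamma_saturation [set p | inSL p.1 -> V (Ffun D p.1 p.2)]).
split; [exact: gamma_saturation_open | exact: gamma_saturation_nbhs |].
by move=> M' t' /gamma_saturation_Ffun + M'SL _; exact.
Qed.

Lemma Ffun_continuous_at M t k : bounded_set D -> inSL M ->
  (Ffun D M t < k%:E)%E ->
  (forall u, latpt M u != 0 -> ~ bdry (cyl D t k) (latpt M u)) ->
  F_continuous_at D M t.
Proof.
move=> Db MSL Fk ubdry; have Mu := inSL_unit MSL.
have [y0 Fy0] := Ffun_fin_of_lt Fk; have [[y00 [u0 [u0y u0D]]] y0_min] := Ffun_is_min Fy0.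
move: Fk; rewrite Fy0 lte_fin => y0k.
apply: F_continuous_at_near; rewrite Fy0 => V /nbhs_EFin /nbhs_ballP [eps /= eps0 epsV].
have near_lower : \forall p \near (M, t), ((y0 - eps)%:E < Ffun D p.1 p.2)%E.
  by apply: (near_lt_Ffun Db Mu _ _ ubdry) => [|y /y0_min]; lra.
have u0int : (cyl D t k)° (latpt M u0).
  apply: interior_of_not_bdry (ubdry u0 _).
    by apply: subset_closure; split; rewrite // u0y (ltW y00) (ltW y0k).
  by apply/negP => /eqP u00; move: y00; rewrite -u0y u00 ypartE mxE ltxx.
have u0y_lt : ypart (latpt M u0) < y0 + eps by rewrite u0y; lra.
have near_upper := near_Ffun_lt Db (cyl_interior_nbhs u0int u0y_lt).
apply: filterS2 near_lower near_upper => p lower upper pSL.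
have [m Fm] := Ffun_fin_of_lt (upper pSL).
move: lower (upper pSL); rewrite Fm !lte_fin => ml mu.
by apply: epsV; rewrite -ball_normE /= ltr_norml; lra.
Qed.

End Continuity.

Lemma quot_compact_Ffun_bounded (R : realType) d (D : set 'rV[R]_d)
    (C : set ('M[R]_(d + 1) * 'rV[R]_d)) :
  bounded_set D -> quot_compact D C ->
  exists2 k, 0 < k & forall M t, C (M, t) -> (Ffun D M t < k%:E)%E.
Proof.
move=> Db [CSL _ Ccover].
pose U b := gamma_saturation [set p | inSL p.1 -> (Ffun D p.1 p.2 < b%:E)%E].
have CU : C `<=` \bigcup_(b in setT) U b.
  move=> [M t] /CSL [MSL tD]; have [b Fb] := Ffun_locally_bounded Db MSL tD.
  by exists b => //; exact: gamma_saturation_nbhs.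
have [J [/finite_fsetP [X ->] CJ]] := Ccover _ U (fun b => gamma_saturation_open _) CU.
exists (\big[Num.max/1]_(b <- X) b); first exact: lt_le_trans ltr01 (bigmax_ge_id _ _ _ _).
move=> M t /[dup] /CSL [MSL _] /CJ [b bX bU].
have Fb := @gamma_saturation_Ffun _ _ D (fun y => (y < b%:E)%E) M t bU MSL.
by rewrite (lt_le_trans Fb) // lee_fin le_bigmax_seq.
Qed.

Theorem proposition2p2 (R : realType) (d : nat) (hd : (0 < d)%N)
  (D : set 'rV[R]_d)
  (hDb : bounded_set D) (hDi : D° !=set0)
  (C : set ('M[R]_(d + 1) * 'rV[R]_d)) (hC : quot_compact D C) :
  exists kappa : R, 0 < kappa /\
    (forall M t, C (M, t) -> (Ffun D M t < kappa%:E)%E) /\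
    (forall M t, C (M, t) ->
       (forall u : 'rV[int]_(d + 1), latpt M u != 0 ->
          ~ bdry (cyl D t kappa) (latpt M u)) ->
       F_continuous_at D M t).
Proof.
have [kappa kappa0 Fkappa] := quot_compact_Ffun_bounded hDb hC.
exists kappa; split=> //; split=> // M t MtC; case: hC => CSL _ _.
exact: Ffun_continuous_at hDb (CSL M t MtC).1 (Fkappa M t MtC).
Qed.
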